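(* Let $\mathcal{G}$ be an open directed graph with incidence operator $B=B_i\oplus B_b$. The Kirchhoff-Dirac structure $$\mathcal{D}_K(\mathcal{G})=\{(f_1,e^1,f_b,e^b)\in\Lambda_1\times\Lambda^1\times\Lambda_b\times\Lambda^b\mid B_if_1=0,\ B_bf_1=f_b,\ \exists e^{0i}\in\Lambda^{0i}:\ e^1=-B_i^*e^{0i}-B_b^*e^b\}$$ (with flow variables $(f_1,f_b)\in\Lambda_1\times\Lambda_b$ and effort variables $(e^1,e^b)\in\Lambda^1\times\Lambda^b$) is a separable Dirac structure.
   Context: A directed graph has finite vertex set $\mathcal{V}$ ($N$ vertices) and edge set $\mathcal{E}$ ($M$ edges), each edge having distinct tail and head vertices; its incidence matrix $\hat B$ is $N\times M$ with $(i,j)$ entry $1$ if edge $j$ originates at vertex $i$, $-1$ if edge $j$ points towards vertex $i$, $0$ otherwise. Fix a finite-dimensional real vector space $\mathcal{R}$. $\Lambda_0$ (resp. $\Lambda_1$) is the space of functions $\mathcal{V}\to\mathcal{R}$ (resp. $\mathcal{E}\to\mathcal{R}$), with duals $\Lambda^0,\Lambda^1$ (pairings summed over vertices/edges). The incidence operator $B:\Lambda_1\to\Lambda_0$ has matrix $\hat B\otimes I$; $B^*$ is its adjoint. An open graph has a designated set $\mathcal{V}_b$ of boundary vertices, the others $\mathcal{V}_i$ internal; this splits $\Lambda_0=\Lambda_{0i}\oplus\Lambda_{0b}$, $\Lambda^0=\Lambda^{0i}\oplus\Lambda^{0b}$ and $B=B_i\oplus B_b$. The boundary space $\Lambda_b$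 is the space of functions $\mathcal{V}_b\to\mathcal{R}$ (identified with $\Lambda_{0b}$, so $B_b:\Lambda_1\to\Lambda_b$), with dual $\Lambda^b$. A Dirac structure on a flow space $\mathcal{F}$ is a subspace $\mathcal{D}\subset\mathcal{F}\times\mathcal{F}^*$ with $\langle e\mid f\rangle=0$ for all $(f,e)\in\mathcal{D}$ and $\dim\mathcal{D}=\dim\mathcal{F}$; it is separable if $\langle e_a\mid f_b\rangle=0$ for all $(f_a,e_a),(f_b,e_b)\in\mathcal{D}$. *)

From HB Require Import structures.
From mathcomp Require Import all_boot all_order all_algebra.
Set Implicit Arguments. Unset Strict Implicit. Unset Printing Implicit Defensive.
Import Order.TTheory GRing.Theory Num.Theory.
Local Open Scope ring_scope.

(* Vertex set = Vi + Vb (internal + boundary vertices), edge set E,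
   edge j has tail (origin) [tl j] and head [hd j].
   The fixed finite-dimensional real vector space R is 'rV[K]_d;
   its dual is identified with 'rV[K]_d via the pairing <u|v> = u v^T. *)

Section OpenGraph.
Variables (K : realFieldType) (d : nat) (Vi Vb E : finType).
Variables (tl hd : E -> (Vi + Vb)%type).

Definition vec := 'rV[K]_d.
Definition dotv (u v : vec) : K := (u *m v^T) 0 0.

Definition Lam1 := {ffun E -> vec}.
Definition Lam0i := {ffun Vi -> vec}.
Definition Lamb := {ffun Vb -> vec}.

Definition Bhat (v : (Vi + Vb)%type) (j : E) : K :=
  if tl j == v then 1 else if hd j == v then -1 else 0.

Definition Bi (f : Lam1) : Lam0i := [ffun i => \sum_j Bhat (inl i) j *: f j].
Definition Bb (f : Lam1) : Lamb := [ffun b => \sum_j Bhat (inr b) j *: f j].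
Definition Bi_adj (e : Lam0i) : Lam1 := [ffun j => \sum_i Bhat (inl i) j *: e i].
Definition Bb_adj (e : Lamb) : Lam1 := [ffun j => \sum_b Bhat (inr b) j *: e b].

(* flow space F = Lambda_1 x Lambda_b ; effort space F^* = Lambda^1 x Lambda^b *)
Definition Flow := (Lam1 * Lamb)%type.

Definition pairing (e f : Flow) : K :=
  \sum_j dotv (e.1 j) (f.1 j) + \sum_b dotv (e.2 b) (f.2 b).

(* a Dirac structure D ⊂ F x F^* (elements (f, e)) *)
Definition dirac (D : {vspace (Flow * Flow)}) : Prop :=
  (forall x, x \in D -> pairing x.2 x.1 = 0) /\
  \dim D = \dim (fullv : {vspace Flow}).

Definition separable_dirac (D : {vspace (Flow * Flow)}) : Prop :=
  dirac D /\ forall a b, a \in D -> b \in D -> pairing a.2 b.1 = 0.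

Definition kirchhoff_dirac (x : Flow * Flow) : Prop :=
  let: ((f1, fb), (e1, eb)) := x in
  Bi f1 = 0 /\ Bb f1 = fb /\
  exists e0i : Lam0i, e1 = - Bi_adj e0i - Bb_adj eb.

End OpenGraph.

From HB Require Import structures.
From mathcomp Require Import all_boot all_order all_algebra zify.
Set Implicit Arguments. Unset Strict Implicit. Unset Printing Implicit Defensive.
Import Order.TTheory GRing.Theory Num.Theory.
Local Open Scope ring_scope.

(* D_K is the direct sum of three injective images: Kirchhoff flows
   f in ker B_i paired with their boundary flows B_b f, internal efforts
   - B_i^* e^0i in im B_i^*, and boundary efforts (- B_b^* e^b, e^b).
   Its dimension is dim ker B_i + dim im B_i^* + dim Lambda_b, and
   ker B_i and im B_i^* are complementary since they are orthogonal for the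
   positive definite pairing, giving dim Lambda_1 + dim Lambda_b.
   Separability is adjointness: for (f, e) and (f', e') in D_K,
   <e | f'> = - <e^0i, B_i f'> - <e^b, B_b f'> + <e^b, f'_b> = 0. *)

(* Rank-nullity for f and g: the two direct sums fit into U and V, and the
   dimensions add up to \dim U + \dim V, so both inclusions are equalities. *)
Lemma dim_lker_add_limg (F : fieldType) (U V : vectType F)
    (f : 'Hom(U, V)) (g : 'Hom(V, U)) :
  (lker f :&: limg g = 0)%VS -> (lker g :&: limg f = 0)%VS ->
  (\dim (lker f) + \dim (limg g) = \dim {:U})%N.
Proof.
move=> fg0 gf0; have := limg_ker_dim f fullv; have := limg_ker_dim g fullv.
have := dimvS (subvf (lker f + limg g)); have := dimvS (subvf (lker g + limg f)).
by rewrite !capfv !dimv_disjoint_sum //; lia.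
Qed.

Lemma scale_pair_addE (R : pzRingType) (U V : lmodType R) (a : R)
    (u u' : U) (v v' : V) :
  a *: (u, v) + (u', v') = (a *: u + u', a *: v + v').
Proof. by []. Qed.

Lemma add_pairE (U V : zmodType) (u u' : U) (v v' : V) :
  (u, v) + (u', v') = (u + u', v + v').
Proof. by []. Qed.

Lemma dim_img_inj (F : fieldType) (U V : vectType F) (f : {linear U -> V}) :
  injective f -> forall W : {vspace U}, \dim (linfun f @: W) = \dim W.
Proof.
move=> inj_f W; apply: limg_dim_eq.
suff /eqP -> : lker (linfun f) == 0%VS by rewrite capv0.
by apply/lker0P => x y; rewrite !lfunE; apply: inj_f.
Qed.

Section Pairing.
Variables (K : realFieldType) (d : nat).

Lemma dotvC (u v : vec K d) : dotv u v = dotv v u.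
Proof. by rewrite /dotv !mxE; apply: eq_bigr => k _; rewrite !mxE mulrC. Qed.

Lemma dotvDl (u w v : vec K d) : dotv (u + w) v = dotv u v + dotv w v.
Proof. by rewrite /dotv mulmxDl mxE. Qed.

Lemma dotvNl (u v : vec K d) : dotv (- u) v = - dotv u v.
Proof. by rewrite /dotv mulNmx mxE. Qed.

Lemma dotvZl (a : K) (u v : vec K d) : dotv (a *: u) v = a * dotv u v.
Proof. by rewrite /dotv -scalemxAl mxE. Qed.

Lemma dotv_suml (I : finType) (u : I -> vec K d) (v : vec K d) :
  dotv (\sum_i u i) v = \sum_i dotv (u i) v.
Proof. by rewrite /dotv mulmx_suml summxE. Qed.

Lemma dotv_ge0 (u : vec K d) : 0 <= dotv u u.
Proof. by rewrite /dotv mxE sumr_ge0 // => k _; rewrite mxE -expr2 sqr_ge0. Qed.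

Lemma dotv_eq0 (u : vec K d) : dotv u u = 0 -> u = 0.
Proof.
rewrite /dotv mxE => /psumr_eq0P u0; apply/rowP => k; rewrite mxE.
have /eqP : u 0 k * u^T k 0 = 0 by apply: u0 => // i _; rewrite mxE -expr2 sqr_ge0.
by rewrite mxE mulf_eq0 orbb => /eqP.
Qed.

Definition dotf (I : finType) (x y : {ffun I -> vec K d}) : K :=
  \sum_i dotv (x i) (y i).

Lemma dotfDl (I : finType) (x y z : {ffun I -> vec K d}) :
  dotf (x + y) z = dotf x z + dotf y z.
Proof.
by rewrite /dotf -big_split; apply: eq_bigr => i _; rewrite ffunE dotvDl.
Qed.

Lemma dotfNl (I : finType) (x y : {ffun I -> vec K d}) :
  dotf (- x) y = - dotf x y.
Proof. by rewrite /dotf -sumrN; apply: eq_bigr => i _; rewrite ffunE dotvNl. Qed.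

Lemma dotf0r (I : finType) (x : {ffun I -> vec K d}) : dotf x 0 = 0.
Proof. by rewrite /dotf big1 // => i _; rewrite ffunE dotvC /dotv mul0mx mxE. Qed.

Lemma dotf_eq0 (I : finType) (x : {ffun I -> vec K d}) :
  dotf x x = 0 -> x = 0.
Proof.
move=> /psumr_eq0P x0; apply/ffunP => i; rewrite ffunE; apply: dotv_eq0.
by apply: x0 => // j _; apply: dotv_ge0.
Qed.

(* Applies the coefficient matrix c, tensored with the identity on vec: both
   B_i, B_b and their adjoints are of this form, with transposed coefficients. *)
Definition lcomb (I J : finType) (c : I -> J -> K) (x : {ffun I -> vec K d}) :
  {ffun J -> vec K d} := [ffun j => \sum_i c i j *: x i].

Lemma lcomb_is_linear (I J : finType) (c : I -> J -> K) : linear (lcomb c).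
Proof.
move=> a x y; apply/ffunP => j; rewrite !ffunE scaler_sumr -big_split.
by apply: eq_bigr => i _; rewrite !ffunE scalerDr !scalerA mulrC.
Qed.

Lemma dotf_lcomb (I J : finType) (c : I -> J -> K) x y :
  dotf (lcomb c x) y = dotf x (lcomb (fun j i => c i j) y).
Proof.
rewrite /dotf; under eq_bigr do rewrite ffunE dotv_suml.
under [RHS]eq_bigr do rewrite ffunE dotvC dotv_suml.
rewrite exchange_big; apply: eq_bigr => i _; apply: eq_bigr => j _.
by rewrite !dotvZl dotvC.
Qed.

HB.instance Definition _ (I J : finType) (c : I -> J -> K) :=
  GRing.isLinear.Build K {ffun I -> vec K d} {ffun J -> vec K d} *:%R (lcomb c)
    (lcomb_is_linear c).

(* If x = A^T y and A x = 0 then <x, x> = <y, A x> = 0. *)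
Lemma lker_lcomb_cap_limg_lcombT (I J : finType) (c : I -> J -> K) :
  (lker (linfun (lcomb c)) :&: limg (linfun (lcomb (fun j i => c i j))) = 0)%VS.
Proof.
apply/eqP; rewrite -subv0; apply/subvP => x /memv_capP[].
rewrite memv_ker lfunE => /eqP cx0 /memv_imgP[y _]; rewrite lfunE => def_x.
rewrite memv0; apply/eqP/dotf_eq0.
by rewrite {1}def_x dotf_lcomb cx0 dotf0r.
Qed.

Lemma dim_lker_lcomb_add_limg_lcombT (I J : finType) (c : I -> J -> K) :
  (\dim (lker (linfun (lcomb c))) + \dim (limg (linfun (lcomb (fun j i => c i j))))
    = \dim {:{ffun I -> vec K d}})%N.
Proof.
apply: dim_lker_add_limg; first exact: lker_lcomb_cap_limg_lcombT.
exact: (lker_lcomb_cap_limg_lcombT (fun j i => c i j)).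
Qed.

End Pairing.

Section KirchhoffDirac.
Variables (K : realFieldType) (d : nat) (Vi Vb E : finType).
Variables (tl hd : E -> (Vi + Vb)%type).

Local Notation Lam1 := (Lam1 K d E).
Local Notation Lam0i := (Lam0i K d Vi).
Local Notation Lamb := (Lamb K d Vb).
Local Notation Flow := (Flow K d Vb E).
Local Notation Bi_hom := (linfun (Bi tl hd) : 'Hom(Lam1, Lam0i)).
Local Notation Bi_adj_hom := (linfun (Bi_adj tl hd) : 'Hom(Lam0i, Lam1)).

HB.instance Definition _ := GRing.isLinear.Build K Lam1 Lam0i *:%R (Bi tl hd)
  (lcomb_is_linear _).
HB.instance Definition _ := GRing.isLinear.Build K Lam0i Lam1 *:%R (Bi_adj tl hd)
  (lcomb_is_linear _).
HB.instance Definition _ := GRing.isLinear.Build K Lam1 Lamb *:%R (Bb tl hd)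
  (lcomb_is_linear _).
HB.instance Definition _ := GRing.isLinear.Build K Lamb Lam1 *:%R (Bb_adj tl hd)
  (lcomb_is_linear _).

Lemma dotf_Bi_adj (e : Lam0i) (f : Lam1) :
  dotf (Bi_adj tl hd e) f = dotf e (Bi tl hd f).
Proof. exact: dotf_lcomb. Qed.

Lemma dotf_Bb_adj (e : Lamb) (f : Lam1) :
  dotf (Bb_adj tl hd e) f = dotf e (Bb tl hd f).
Proof. exact: dotf_lcomb. Qed.

Definition kirchhoff_flow (f : Lam1) : Flow * Flow := ((f, Bb tl hd f), (0, 0)).
Definition edge_effort (e : Lam1) : Flow * Flow := ((0, 0), (e, 0)).
Definition boundary_effort (eb : Lamb) : Flow * Flow :=
  ((0, 0), (- Bb_adj tl hd eb, eb)).

Lemma kirchhoff_flow_is_linear : linear kirchhoff_flow.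
Proof.
by move=> a f g; rewrite /kirchhoff_flow linearP !scale_pair_addE !scaler0 !addr0.
Qed.

Lemma edge_effort_is_linear : linear edge_effort.
Proof. by move=> a e e'; rewrite /edge_effort !scale_pair_addE !scaler0 !addr0. Qed.

Lemma boundary_effort_is_linear : linear boundary_effort.
Proof.
rewrite /boundary_effort => a e e'.
by rewrite linearP !scale_pair_addE !scaler0 !addr0 opprD scalerN.
Qed.

HB.instance Definition _ := GRing.isLinear.Build K Lam1 (Flow * Flow)%type *:%R
  kirchhoff_flow kirchhoff_flow_is_linear.
HB.instance Definition _ := GRing.isLinear.Build K Lam1 (Flow * Flow)%type *:%R
  edge_effort edge_effort_is_linear.
HB.instance Definition _ := GRing.isLinear.Build K Lamb (Flow * Flow)%type *:%R
  boundary_effort boundary_effort_is_linear.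

Lemma kirchhoff_flow_inj : injective kirchhoff_flow.
Proof. by move=> f f' /(congr1 (fun x : Flow * Flow => x.1.1)). Qed.

Lemma edge_effort_inj : injective edge_effort.
Proof. by move=> e e' /(congr1 (fun x : Flow * Flow => x.2.1)). Qed.

Lemma boundary_effort_inj : injective boundary_effort.
Proof. by move=> e e' /(congr1 (fun x : Flow * Flow => x.2.2)). Qed.

Lemma kirchhoff_flow_effortE f e eb :
  kirchhoff_flow f + (edge_effort e + boundary_effort eb) =
  ((f, Bb tl hd f), (e - Bb_adj tl hd eb, eb)).
Proof.
by rewrite /kirchhoff_flow /edge_effort /boundary_effort !add_pairE !add0r !addr0.
Qed.

Definition kirchhoff_space : {vspace Flow * Flow} :=
  (linfun kirchhoff_flow @: lker Bi_hom
   + (linfun edge_effort @: limg Bi_adj_hom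
      + limg (linfun boundary_effort)))%VS.

Lemma mem_kirchhoff_space x : x \in kirchhoff_space <-> kirchhoff_dirac tl hd x.
Proof.
split.
- case/memv_addP=> y /memv_imgP[f kerf ->] [z /memv_addP[z1 z1E [z2 z2E ->]] ->].
  case/memv_imgP: z1E => e /memv_imgP[e0 _ ->] ->.
  case/memv_imgP: z2E => eb _ ->.
  move: kerf; rewrite memv_ker lfunE => /eqP Bif0.
  rewrite !lfunE kirchhoff_flow_effortE.
  by split=> //; split=> //; exists (- e0); rewrite linearN opprK.
- case: x => [[f fb] [e eb]] [Bif0 [<- [e0 ->]]].
  rewrite -linearN -kirchhoff_flow_effortE -(lfunE kirchhoff_flow).
  rewrite -(lfunE edge_effort) -(lfunE boundary_effort) -(lfunE (Bi_adj tl hd)).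
  apply: memv_add; first by rewrite memv_img // memv_ker lfunE /= Bif0.
  by apply: memv_add; rewrite !memv_img ?memvf.
Qed.

Lemma pairingE (e f : Flow) : pairing e f = dotf e.1 f.1 + dotf e.2 f.2.
Proof. by []. Qed.

Lemma kirchhoff_dirac_pairing (x y : Flow * Flow) :
  kirchhoff_dirac tl hd x -> kirchhoff_dirac tl hd y -> pairing x.2 y.1 = 0 :> K.
Proof.
case: x => [[f1 fb] [e eb]] [_ [_ [e0 ->]]].
case: y => [[f fb'] [e' eb']] [Bif0 [<- _]].
rewrite pairingE /= dotfDl !dotfNl dotf_Bi_adj dotf_Bb_adj Bif0 dotf0r.
by rewrite oppr0 add0r addNr.
Qed.

Lemma kirchhoff_flow_cap_effort :
  (linfun kirchhoff_flow @: lker Bi_hom :&: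
   (linfun edge_effort @: limg Bi_adj_hom
    + limg (linfun boundary_effort)) = 0)%VS.
Proof.
apply/eqP; rewrite -subv0; apply/subvP => x /memv_capP[/memv_imgP[f _ ->]].
case/memv_addP=> _ /memv_imgP[e _ ->] [_ /memv_imgP[eb _ ->]].
rewrite !lfunE /= => /(congr1 (fun x => x.1.1)) /= ->.
by rewrite !addr0 linear0 memv0.
Qed.

Lemma edge_cap_boundary_effort :
  (linfun edge_effort @: limg Bi_adj_hom
   :&: limg (linfun boundary_effort) = 0)%VS.
Proof.
apply/eqP; rewrite -subv0; apply/subvP => x /memv_capP[/memv_imgP[e _ ->]].
case/memv_imgP=> eb _; rewrite !lfunE /= => def_x.
have eb0 : 0 = eb := congr1 (fun x : Flow * Flow => x.2.2) def_x.
by rewrite def_x -eb0 linear0 memv0.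
Qed.

Lemma dim_lker_Bi_add_limg_Bi_adj :
  (\dim (lker Bi_hom) + \dim (limg Bi_adj_hom) = \dim {:Lam1})%N.
Proof. exact: dim_lker_lcomb_add_limg_lcombT. Qed.

Lemma dim_kirchhoff_space : \dim kirchhoff_space = \dim {:Flow}.
Proof.
rewrite /kirchhoff_space dimv_disjoint_sum ?kirchhoff_flow_cap_effort //.
rewrite dimv_disjoint_sum ?edge_cap_boundary_effort //.
rewrite (dim_img_inj kirchhoff_flow_inj) (dim_img_inj edge_effort_inj).
rewrite (dim_img_inj boundary_effort_inj).
by rewrite addnA dim_lker_Bi_add_limg_Bi_adj !dimvf.
Qed.

Lemma kirchhoff_space_separable : separable_dirac kirchhoff_space.
Proof.
split; last first.
  by move=> a b /mem_kirchhoff_space Da /mem_kirchhoff_space; apply: kirchhoff_dirac_pairing.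
split; last exact: dim_kirchhoff_space.
by move=> x /mem_kirchhoff_space Dx; apply: kirchhoff_dirac_pairing.
Qed.

End KirchhoffDirac.

Arguments kirchhoff_space {K d Vi Vb E}.

Theorem proposition6p1 (K : realFieldType) (d : nat) (Vi Vb E : finType)
  (tl hd : E -> (Vi + Vb)%type) (Hloop : forall j, tl j != hd j) :
  exists D : {vspace (Flow K d Vb E * Flow K d Vb E)},
    (forall x, x \in D <-> kirchhoff_dirac tl hd x) /\
    separable_dirac D.
Proof.
exists (kirchhoff_space tl hd); split; first exact: mem_kirchhoff_space.
exact: kirchhoff_space_separable.
Qed.
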